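(* Let $N$ be a strictly reflexive object of a compact closed category $(\mathcal C,\otimes,I)$ with trivial scalars, so that $N^*\otimes N=N$ and $N\otimes N=N$, and let $\Delta,\nabla\in\mathcal C(N,N)$ be the split and merge arrows of the standard Frobenius algebra at $N=N^*\otimes N$. Then (1) $\nabla\Delta=1_N$; (2) $\Delta\nabla=1_N$ if and only if $N$ is a unit object of the one-object semi-monoidal category $(\mathcal C(N,N),\otimes)$.
   Context: Strictly reflexive: $[N\to N]=N^*\otimes N=N$ with $\mathrm{app},\mathrm{lam}$ identity arrows (and then also $N^*=N$, $N\otimes N=N$). Trivial scalars: $\mathcal C(I,I)=\{1_I\}$. The standard Frobenius algebra at $X^*\otimes X$: split $\Delta=(1_{X^*}\otimes\eta_X\otimes1_X)\circ(X^*\otimes X\cong X^*\otimes I\otimes X)$, merge $\nabla=(X^*\otimes I\otimes X\cong X^*\otimes X)\circ(1_{X^*}\otimes\epsilon_{X^*}\otimes1_X)$, here with $X=N$. A (Saavedra) unit object of a semi-monoidal category is an object $U$ with $U\cong U\otimes U$ such that $U\otimes(-)$ and $(-)\otimes U$ are fully faithful; for the one-object category $(\mathcal C(N,N),\otimes)$ this means the maps $f\mapsto1_N\otimes f$ and $f\mapsto f\otimes1_N$ on $\mathcal C(N,N)$ are bijections. *)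

Set Implicit Arguments.

Record CompactClosedCategory := {
  Obj : Type;
  Hom : Obj -> Obj -> Type;
  id : forall a, Hom a a;
  comp : forall {a b c}, Hom b c -> Hom a b -> Hom a c;
  comp_assoc : forall a b c d (h : Hom c d) (g : Hom b c) (f : Hom a b),
      comp h (comp g f) = comp (comp h g) f;
  comp_id_l : forall a b (f : Hom a b), comp (id b) f = f;
  comp_id_r : forall a b (f : Hom a b), comp f (id a) = f;

  unit : Obj;
  tensor : Obj -> Obj -> Obj;
  tensor_hom : forall {a b c d}, Hom a b -> Hom c d -> Hom (tensor a c) (tensor b d);
  tensor_id : forall a b, tensor_hom (id a) (id b) = id (tensor a b);
  tensor_comp : forall a b c a' b' c' (g : Hom b c) (f : Hom a b)
      (g' : Hom b' c') (f' : Hom a' b'),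
      tensor_hom (comp g f) (comp g' f') = comp (tensor_hom g g') (tensor_hom f f');

  alpha : forall a b c, Hom (tensor (tensor a b) c) (tensor a (tensor b c));
  alpha_inv : forall a b c, Hom (tensor a (tensor b c)) (tensor (tensor a b) c);
  alpha_iso1 : forall a b c, comp (alpha_inv a b c) (alpha a b c) = id _;
  alpha_iso2 : forall a b c, comp (alpha a b c) (alpha_inv a b c) = id _;
  alpha_nat : forall a a' b b' c c' (f : Hom a a') (g : Hom b b') (h : Hom c c'),
      comp (alpha a' b' c') (tensor_hom (tensor_hom f g) h)
      = comp (tensor_hom f (tensor_hom g h)) (alpha a b c);
  lambda : forall a, Hom (tensor unit a) a;
  lambda_inv : forall a, Hom a (tensor unit a);
  lambda_iso1 : forall a, comp (lambda_inv a) (lambda a) = id _;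
  lambda_iso2 : forall a, comp (lambda a) (lambda_inv a) = id _;
  lambda_nat : forall a a' (f : Hom a a'),
      comp (lambda a') (tensor_hom (id unit) f) = comp f (lambda a);
  rho : forall a, Hom (tensor a unit) a;
  rho_inv : forall a, Hom a (tensor a unit);
  rho_iso1 : forall a, comp (rho_inv a) (rho a) = id _;
  rho_iso2 : forall a, comp (rho a) (rho_inv a) = id _;
  rho_nat : forall a a' (f : Hom a a'),
      comp (rho a') (tensor_hom f (id unit)) = comp f (rho a);
  pentagon : forall a b c d,
      comp (alpha a b (tensor c d)) (alpha (tensor a b) c d)
      = comp (tensor_hom (id a) (alpha b c d))
             (comp (alpha a (tensor b c) d) (tensor_hom (alpha a b c) (id d)));
  triangle : forall a b,
      comp (tensor_hom (id a) (lambda b)) (alpha a unit b)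
      = tensor_hom (rho a) (id b);

  sigma : forall a b, Hom (tensor a b) (tensor b a);
  sigma_inv : forall a b, comp (sigma b a) (sigma a b) = id _;
  sigma_nat : forall a a' b b' (f : Hom a a') (g : Hom b b'),
      comp (sigma a' b') (tensor_hom f g) = comp (tensor_hom g f) (sigma a b);
  hexagon : forall a b c,
      comp (alpha b c a) (comp (sigma a (tensor b c)) (alpha a b c))
      = comp (tensor_hom (id b) (sigma a c))
             (comp (alpha b a c) (tensor_hom (sigma a b) (id c)));

  dual : Obj -> Obj;
  eta : forall a, Hom unit (tensor a (dual a));
  eps : forall a, Hom (tensor (dual a) a) unit;
  zigzag1 : forall a,
      comp (rho a) (comp (tensor_hom (id a) (eps a))
        (comp (alpha a (dual a) a) (comp (tensor_hom (eta a) (id a)) (lambda_inv a))))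
      = id a;
  zigzag2 : forall a,
      comp (lambda (dual a)) (comp (tensor_hom (eps a) (id (dual a)))
        (comp (alpha_inv (dual a) a (dual a))
          (comp (tensor_hom (id (dual a)) (eta a)) (rho_inv (dual a)))))
      = id (dual a)
}.

Arguments id {_}.
Arguments comp {_ _ _ _} _ _.
Arguments unit {_}.
Arguments tensor {_}.
Arguments tensor_hom {_ _ _ _ _} _ _.
Arguments lambda {_}.
Arguments lambda_inv {_}.
Arguments dual {_}.
Arguments eta {_}.
Arguments eps {_}.

Section Frobenius.
Variable C : CompactClosedCategory.

Definition castHom {a a' b b' : Obj C} (ea : a = a') (eb : b = b')
  (f : Hom C a b) : Hom C a' b' :=
  match ea in _ = x return Hom C x b' with
  | eq_refl => match eb in _ = y return Hom C a y with eq_refl => f end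
  end.

(** Strict reflexivity data: N^* = N and N (x) N = N (hence N^* (x) N = N). *)
Variables (N : Obj C) (eD : dual N = N) (eT : tensor N N = N).

Definition eDD : dual (dual N) = N := eq_trans (f_equal dual eD) eD.

Definition eDT : tensor (dual N) N = N :=
  eq_trans (f_equal (fun x => tensor x N) eD) eT.

(** X^* (x) ((X (x) X^* ) (x) X) = N, with X = X^* = N *)
Definition eBig : tensor N (tensor (tensor N N) N) = N :=
  eq_trans (f_equal (tensor N) (eq_trans (f_equal (fun x => tensor x N) eT) eT)) eT.

Definition etaN : Hom C unit (tensor N N) :=
  castHom eq_refl (f_equal (tensor N) eD) (eta N).

Definition epsNs : Hom C (tensor N N) unit :=
  castHom (f_equal2 tensor eDD eD) eq_refl (eps (dual N)).

(** split: Delta = (1_{X^*} (x) eta_X (x) 1_X) o (X^* (x) X ~= X^* (x) (I (x) X)),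
    as an arrow N -> N *)
Definition splitN : Hom C N N :=
  castHom eT eBig
    (comp (tensor_hom (id N) (tensor_hom etaN (id N)))
          (tensor_hom (id N) (lambda_inv N))).

(** merge: Nabla = (X^* (x) (I (x) X) ~= X^* (x) X ) o (1_{X^*} (x) eps_{X^*} (x) 1_X),
    as an arrow N -> N *)
Definition mergeN : Hom C N N :=
  castHom eBig eT
    (comp (tensor_hom (id N) (lambda N))
          (tensor_hom (id N) (tensor_hom epsNs (id N)))).

Definition tensorNN (f g : Hom C N N) : Hom C N N :=
  castHom eT eT (tensor_hom f g).

Definition bijective_fun {A B : Type} (F : A -> B) : Prop :=
  (forall x y, F x = F y -> x = y) /\ (forall y, exists x, F x = y).

(** (Saavedra) unit object of the one-object semi-monoidal category
    (C(N,N), (x)): its only object N satisfies N ~= N (x) N (an invertible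
    arrow of C(N,N)), and N (x) (-) and (-) (x) N are fully faithful, i.e.
    f |-> 1_N (x) f and f |-> f (x) 1_N are bijections on C(N,N). *)
Definition SaavedraUnitNN : Prop :=
  (exists u v : Hom C N N, comp u v = id N /\ comp v u = id N) /\
  bijective_fun (fun f => tensorNN (id N) f) /\
  bijective_fun (fun f => tensorNN f (id N)).

End Frobenius.

Definition trivial_scalars (C : CompactClosedCategory) : Prop :=
  forall f : Hom C unit unit, f = id unit.

Arguments splitN {C N} eD eT.
Arguments mergeN {C N} eD eT.
Arguments SaavedraUnitNN {C N} eT.
Arguments tensorNN {C N} eT f g.
Arguments castHom {C a a' b b'} ea eb f.

(** With trivial scalars the cup [p : I -> N] and the cap [q : N -> I] of the
    standard Frobenius algebra satisfy [q p = 1_I], and this alone gives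
    [merge o split = 1].  The other composite is [1 (x) (e (x) 1)] with the
    idempotent [e = p q].  The arrows [lambda (q (x) 1)] and
    [(p (x) 1) lambda^-1] exhibit [f |-> 1 (x) f] as a retract of the identity
    of [C(N,N)] whose complementary composite is [e (x) 1]; hence [1 (x) -] is
    always injective and it is surjective iff [e (x) 1 = 1].  Symmetrically
    [- (x) 1] is surjective iff [1 (x) e = 1], and by injectivity every one of
    these conditions, as well as [split o merge = 1], amounts to [e = 1]. *)

From Stdlib Require Import ProofIrrelevance Setoid.

Section Casts.
Variable C : CompactClosedCategory.

Lemma castHom_comp (a a' b b' c c' : Obj C) (ea : a = a') (eb eb' : b = b')
    (ec : c = c') (g : Hom C b c) (f : Hom C a b) :
  comp (castHom eb ec g) (castHom ea eb' f) = castHom ea ec (comp g f).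
Proof. rewrite (proof_irrelevance _ eb' eb). destruct ea, eb, ec. reflexivity. Qed.

Lemma comp_castHom_dom (a a' b c : Obj C) (ea : a = a') (g : Hom C b c) (f : Hom C a b) :
  comp g (castHom ea eq_refl f) = castHom ea eq_refl (comp g f).
Proof. destruct ea. reflexivity. Qed.

Lemma comp_castHom_cod (a b c c' : Obj C) (ec : c = c') (g : Hom C b c) (f : Hom C a b) :
  comp (castHom eq_refl ec g) f = castHom eq_refl ec (comp g f).
Proof. destruct ec. reflexivity. Qed.

Lemma castHom_id (a a' : Obj C) (e e' : a = a') : castHom e e' (id a) = id a'.
Proof. rewrite (proof_irrelevance _ e' e). destruct e. reflexivity. Qed.

Lemma castHom_castHom (a a' a'' b b' b'' : Obj C) (ea' : a' = a'') (eb' : b' = b'')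
    (ea : a = a') (eb : b = b') (f : Hom C a b) :
  castHom ea' eb' (castHom ea eb f) = castHom (eq_trans ea ea') (eq_trans eb eb') f.
Proof. destruct ea', eb', ea, eb. reflexivity. Qed.

Lemma castHom_congr (a a' b b' : Obj C) (ea ea' : a = a') (eb eb' : b = b')
    (f g : Hom C a b) :
  f = g -> castHom ea eb f = castHom ea' eb' g.
Proof.
  intros ->. rewrite (proof_irrelevance _ ea ea'), (proof_irrelevance _ eb eb'). reflexivity.
Qed.

Lemma tensor_hom_castHom_l (a a' b b' c d : Obj C) (ea : a = a') (eb : b = b')
    (f : Hom C a b) (g : Hom C c d) :
  tensor_hom (castHom ea eb f) g =
  castHom (f_equal (fun x => tensor x c) ea) (f_equal (fun x => tensor x d) eb)
    (tensor_hom f g).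
Proof. destruct ea, eb. reflexivity. Qed.

Lemma tensor_hom_castHom_r (a a' b b' c d : Obj C) (ea : a = a') (eb : b = b')
    (f : Hom C a b) (g : Hom C c d) :
  tensor_hom g (castHom ea eb f) =
  castHom (f_equal (tensor c) ea) (f_equal (tensor d) eb) (tensor_hom g f).
Proof. destruct ea, eb. reflexivity. Qed.

End Casts.

Section Monoidal.
Variable C : CompactClosedCategory.

Lemma tensor_hom_comp (a b c a' b' c' : Obj C) (g : Hom C b c) (f : Hom C a b)
    (g' : Hom C b' c') (f' : Hom C a' b') :
  comp (tensor_hom g g') (tensor_hom f f') = tensor_hom (comp g f) (comp g' f').
Proof. symmetry. apply tensor_comp. Qed.

Lemma tensor_hom_interchange (a b c d : Obj C) (f : Hom C a b) (g : Hom C c d) :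
  comp (tensor_hom f (id d)) (tensor_hom (id a) g)
  = comp (tensor_hom (id b) g) (tensor_hom f (id c)).
Proof. rewrite !tensor_hom_comp, !comp_id_l, !comp_id_r. reflexivity. Qed.

Lemma lambda_inv_nat (a a' : Obj C) (f : Hom C a a') :
  comp (tensor_hom (id unit) f) (lambda_inv a) = comp (lambda_inv a') f.
Proof.
  rewrite <- (comp_id_l C _ _ (comp (tensor_hom (id unit) f) (lambda_inv a))).
  rewrite <- (lambda_iso1 C a'), <- comp_assoc, (comp_assoc C _ _ _ _ (lambda a')).
  rewrite lambda_nat, <- comp_assoc, lambda_iso2, comp_id_r. reflexivity.
Qed.

Lemma rho_inv_nat (a a' : Obj C) (f : Hom C a a') :
  comp (tensor_hom f (id unit)) (rho_inv C a) = comp (rho_inv C a') f.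
Proof.
  rewrite <- (comp_id_l C _ _ (comp (tensor_hom f (id unit)) (rho_inv C a))).
  rewrite <- (rho_iso1 C a'), <- comp_assoc, (comp_assoc C _ _ _ _ (rho C a')).
  rewrite rho_nat, <- comp_assoc, rho_iso2, comp_id_r. reflexivity.
Qed.

End Monoidal.

Section Retract.
Variables (C : CompactClosedCategory) (X : Obj C) (F : Hom C X X -> Hom C X X)
  (P Q : Hom C X X).
Hypothesis F_id : F (id X) = id X.
Hypothesis P_Q : comp P Q = id X.
Hypothesis P_F : forall f, comp P (F f) = comp f P.
Hypothesis F_Q : forall f, comp (F f) Q = comp Q f.

Lemma retract_cancel (f : Hom C X X) : comp (comp P (F f)) Q = f.
Proof. rewrite P_F, <- comp_assoc, P_Q, comp_id_r. reflexivity. Qed.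

Lemma retract_inj (f g : Hom C X X) : F f = F g -> f = g.
Proof. intro Efg. rewrite <- (retract_cancel f), <- (retract_cancel g), Efg. reflexivity. Qed.

Lemma retract_eq_id (f : Hom C X X) : F f = id X <-> f = id X.
Proof.
  split; intro Ef.
  - apply retract_inj. rewrite Ef, F_id. reflexivity.
  - rewrite Ef. exact F_id.
Qed.

Lemma retract_bijective_iff : bijective_fun F <-> comp Q P = id X.
Proof.
  split.
  - intros [_ F_surj]. destruct (F_surj (comp Q P)) as [g Eg].
    assert (Eg1 : g = id X).
    { rewrite <- (retract_cancel g), Eg, !comp_assoc, P_Q, comp_id_l. exact P_Q. }
    rewrite <- Eg, Eg1. exact F_id.
  - intro Q_P. split; [exact retract_inj|]. intro f.
    exists (comp (comp P f) Q).
    (* [F h = F h Q P = Q h P], and [P Q] cancels on both sides *)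
    rewrite <- (comp_id_r C _ _ (F _)), <- Q_P, comp_assoc, F_Q.
    rewrite !comp_assoc, Q_P, comp_id_l, <- comp_assoc, Q_P, comp_id_r. reflexivity.
Qed.

End Retract.

Section StrictlyReflexive.
Variables (C : CompactClosedCategory) (N : Obj C) (eD : dual N = N) (eT : tensor N N = N).

Local Notation tensorL f := (tensorNN eT (id N) f).
Local Notation tensorR f := (tensorNN eT f (id N)).

Lemma tensorNN_id : tensorNN eT (id N) (id N) = id N.
Proof. unfold tensorNN. rewrite tensor_id. apply castHom_id. Qed.

Definition cupN : Hom C unit N := castHom eq_refl eT (etaN C eD).
Definition capN : Hom C N unit := castHom eT eq_refl (epsNs C eD).

Definition contractL (q : Hom C N unit) : Hom C N N :=
  castHom eT eq_refl (comp (lambda N) (tensor_hom q (id N))).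
Definition insertL (p : Hom C unit N) : Hom C N N :=
  castHom eq_refl eT (comp (tensor_hom p (id N)) (lambda_inv N)).
Definition contractR (q : Hom C N unit) : Hom C N N :=
  castHom eT eq_refl (comp (rho C N) (tensor_hom (id N) q)).
Definition insertR (p : Hom C unit N) : Hom C N N :=
  castHom eq_refl eT (comp (tensor_hom (id N) p) (rho_inv C N)).

Section Points.
Variables (p : Hom C unit N) (q : Hom C N unit).

Lemma contractL_insertL : trivial_scalars C -> comp (contractL q) (insertL p) = id N.
Proof.
  intro triv. unfold contractL, insertL. rewrite castHom_comp.
  rewrite <- comp_assoc, (comp_assoc C _ _ _ _ (tensor_hom q _)), tensor_hom_comp,
    (triv (comp q p)), comp_id_l, tensor_id, comp_id_l, lambda_iso2.
  reflexivity.
Qed.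

Lemma contractR_insertR : trivial_scalars C -> comp (contractR q) (insertR p) = id N.
Proof.
  intro triv. unfold contractR, insertR. rewrite castHom_comp.
  rewrite <- comp_assoc, (comp_assoc C _ _ _ _ (tensor_hom _ q)), tensor_hom_comp,
    (triv (comp q p)), comp_id_l, tensor_id, comp_id_l, rho_iso2.
  reflexivity.
Qed.

Lemma insertL_contractL : comp (insertL p) (contractL q) = tensorR (comp p q).
Proof.
  unfold insertL, contractL, tensorNN. rewrite castHom_comp.
  rewrite <- comp_assoc, (comp_assoc C _ _ _ _ (lambda_inv N)), lambda_iso1, comp_id_l,
    tensor_hom_comp, comp_id_l.
  reflexivity.
Qed.

Lemma insertR_contractR : comp (insertR p) (contractR q) = tensorL (comp p q).
Proof.
  unfold insertR, contractR, tensorNN. rewrite castHom_comp.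
  rewrite <- comp_assoc, (comp_assoc C _ _ _ _ (rho_inv C N)), rho_iso1, comp_id_l,
    tensor_hom_comp, comp_id_l.
  reflexivity.
Qed.

Lemma contractL_tensorL (f : Hom C N N) :
  comp (contractL q) (tensorL f) = comp f (contractL q).
Proof.
  unfold contractL, tensorNN.
  rewrite castHom_comp, comp_castHom_dom.
  f_equal. rewrite <- comp_assoc, tensor_hom_interchange, comp_assoc, lambda_nat, comp_assoc.
  reflexivity.
Qed.

Lemma tensorL_insertL (f : Hom C N N) :
  comp (tensorL f) (insertL p) = comp (insertL p) f.
Proof.
  unfold insertL, tensorNN.
  rewrite castHom_comp, comp_castHom_cod.
  f_equal. rewrite comp_assoc, <- tensor_hom_interchange, <- !comp_assoc, lambda_inv_nat.
  reflexivity.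
Qed.

Lemma contractR_tensorR (f : Hom C N N) :
  comp (contractR q) (tensorR f) = comp f (contractR q).
Proof.
  unfold contractR, tensorNN.
  rewrite castHom_comp, comp_castHom_dom.
  f_equal. rewrite <- comp_assoc, <- tensor_hom_interchange, comp_assoc, rho_nat, comp_assoc.
  reflexivity.
Qed.

Lemma tensorR_insertR (f : Hom C N N) :
  comp (tensorR f) (insertR p) = comp (insertR p) f.
Proof.
  unfold insertR, tensorNN.
  rewrite castHom_comp, comp_castHom_cod.
  f_equal. rewrite comp_assoc, tensor_hom_interchange, <- !comp_assoc, rho_inv_nat.
  reflexivity.
Qed.

Lemma bijective_tensorL_iff :
  trivial_scalars C -> bijective_fun (fun f => tensorL f) <-> tensorR (comp p q) = id N.
Proof.
  intro triv. rewrite <- insertL_contractL.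
  apply retract_bijective_iff; [apply tensorNN_id | apply contractL_insertL, triv |
    apply contractL_tensorL | apply tensorL_insertL].
Qed.

Lemma bijective_tensorR_iff :
  trivial_scalars C -> bijective_fun (fun f => tensorR f) <-> tensorL (comp p q) = id N.
Proof.
  intro triv. rewrite <- insertR_contractR.
  apply retract_bijective_iff; [apply tensorNN_id | apply contractR_insertR, triv |
    apply contractR_tensorR | apply tensorR_insertR].
Qed.

End Points.

Lemma mergeN_splitN : trivial_scalars C -> comp (mergeN eD eT) (splitN eD eT) = id N.
Proof.
  intro triv. unfold mergeN, splitN.
  rewrite castHom_comp, <- comp_assoc,
    (comp_assoc C _ _ _ _ (tensor_hom (id N) (tensor_hom _ _))), !tensor_hom_comp, !comp_id_l.
  rewrite (triv (comp _ _)), tensor_id, comp_id_l, lambda_iso2, tensor_id.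
  apply castHom_id.
Qed.

Lemma tensorL_eq_id (f : Hom C N N) :
  trivial_scalars C -> tensorL f = id N <-> f = id N.
Proof.
  intro triv. apply (retract_eq_id C N (fun f => tensorL f) (contractL capN) (insertL cupN));
    [apply tensorNN_id | apply contractL_insertL, triv | apply contractL_tensorL].
Qed.

Lemma tensorR_eq_id (f : Hom C N N) :
  trivial_scalars C -> tensorR f = id N <-> f = id N.
Proof.
  intro triv. apply (retract_eq_id C N (fun f => tensorR f) (contractR capN) (insertR cupN));
    [apply tensorNN_id | apply contractR_insertR, triv | apply contractR_tensorR].
Qed.

Lemma splitN_mergeN :
  comp (splitN eD eT) (mergeN eD eT) = tensorL (tensorR (comp cupN capN)).
Proof.
  unfold splitN, mergeN, cupN, capN, tensorNN.
  rewrite !castHom_comp, tensor_hom_castHom_l, castHom_castHom, tensor_hom_castHom_r,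
    castHom_castHom.
  apply castHom_congr.
  rewrite <- comp_assoc, (comp_assoc C _ _ _ _ (tensor_hom (id N) (lambda_inv N))),
    tensor_hom_comp, lambda_iso1, comp_id_l, tensor_id, comp_id_l,
    tensor_hom_comp, comp_id_l, tensor_hom_comp, comp_id_l.
  reflexivity.
Qed.

End StrictlyReflexive.

Theorem mainTheorem10 (C : CompactClosedCategory) (N : Obj C)
  (eD : dual N = N) (eT : tensor N N = N)
  (triv : trivial_scalars C) :
  comp (mergeN eD eT) (splitN eD eT) = id N /\
  (comp (splitN eD eT) (mergeN eD eT) = id N <-> SaavedraUnitNN eT).
Proof.
  split; [exact (mergeN_splitN C N eD eT triv)|].
  assert (iso : exists u v : Hom C N N, comp u v = id N /\ comp v u = id N)
    by (exists (id N), (id N); split; apply comp_id_l).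
  unfold SaavedraUnitNN.
  rewrite splitN_mergeN, (bijective_tensorL_iff C N eT (cupN C N eD eT) (capN C N eD eT) triv),
    (bijective_tensorR_iff C N eT (cupN C N eD eT) (capN C N eD eT) triv),
    !(tensorL_eq_id C N eD eT _ triv), !(tensorR_eq_id C N eD eT _ triv).
  tauto.
Qed.
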